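(* Let $F:\mathbb{R}^d\to\mathbb{R}$ belong to $C^{1,1}(\mathbb{R}^d)$ with Lipschitz constant $L>0$ for its gradient, let $\boldsymbol{\Xi}=(\boldsymbol{\xi}_1,\ldots,\boldsymbol{\xi}_d)$ be an orthonormal basis of $\mathbb{R}^d$, let $\sigma>0$ and $M\ge 1$, and let $C>0$ be a constant such that the Gauss–Hermite quadrature error bound $$\big|\widetilde{\mathscr{D}}^M[G_\sigma(0\,|\,\boldsymbol x,\boldsymbol\xi_i)]-\mathscr{D}[G_\sigma(0\,|\,\boldsymbol x,\boldsymbol\xi_i)]\big|\le C\,\frac{M!\,\sqrt{\pi}}{2^M\,(2M)!}\,\sigma^{2M-1}$$ holds for all $i\in\{1,\ldots,d\}$ at the point $\boldsymbol x\in\mathbb{R}^d$. Then $$\big\|\widetilde{\nabla}^M_{\sigma,\boldsymbol\Xi}[F](\boldsymbol x)-\nabla F(\boldsymbol x)\big\|^2\le \frac{2C^2\pi d\,(M!)^2}{4^M((2M)!)^2}\,\sigma^{4M-2}+32\,d\,L^2\sigma^2 .$$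
   Context: $F\in C^{1,1}(\mathbb{R}^d)$ means there is $L>0$ with $\|\nabla F(\boldsymbol x+\boldsymbol\xi)-\nabla F(\boldsymbol x)\|\le L\|\boldsymbol\xi\|$ for all $\boldsymbol x,\boldsymbol\xi\in\mathbb{R}^d$; $\|\cdot\|$ is the Euclidean norm. For $\boldsymbol x\in\mathbb{R}^d$ and a unit vector $\boldsymbol\xi$, set $G(y\,|\,\boldsymbol x,\boldsymbol\xi)=F(\boldsymbol x+y\boldsymbol\xi)$ for $y\in\mathbb{R}$, and $G_\sigma(y\,|\,\boldsymbol x,\boldsymbol\xi)=\mathbb{E}_{v\sim\mathcal N(0,1)}[G(y+\sigma v\,|\,\boldsymbol x,\boldsymbol\xi)]$. Its derivative at $0$ is $\mathscr{D}[G_\sigma(0\,|\,\boldsymbol x,\boldsymbol\xi)]=\frac1\sigma\mathbb{E}_{v\sim\mathcal N(0,1)}[G(\sigma v\,|\,\boldsymbol x,\boldsymbol\xi)\,v]$. The Gauss–Hermite estimator is $\widetilde{\mathscr{D}}^M[G_\sigma(0\,|\,\boldsymbol x,\boldsymbol\xi)]=\frac{1}{\sqrt\pi\,\sigma}\sum_{m=1}^M w_m F(\boldsymbol x+\sqrt2\sigma v_m\boldsymbol\xi)\sqrt2 v_m$, where $v_1,\ldots,v_M$ are the roots of the $M$-th Hermite polynomial $H_M$ (physicists' convention, weight $e^{-v^2}$) and $w_m$ the corresponding Gauss–Hermite quadrature weights. The DGS estimator is $\widetilde{\nabla}^M_{\sigma,\boldsymbol\Xi}[F](\boldsymbol x)=\sum_{i=1}^d\widetilde{\mathscr{D}}^M[G_\sigma(0\,|\,\boldsymbol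 x,\boldsymbol\xi_i)]\,\boldsymbol\xi_i$. *)

From mathcomp Require Import ssreflect ssrfun ssrbool eqtype ssrnat seq fintype bigop.
From Stdlib Require Import Reals Factorial.
Open Scope R_scope.

Definition vec (d : nat) := 'I_d -> R.

Definition vadd {d} (x y : vec d) : vec d := fun k => x k + y k.
Definition vsub {d} (x y : vec d) : vec d := fun k => x k - y k.
Definition vscale {d} (a : R) (x : vec d) : vec d := fun k => a * x k.

Definition rsum (n : nat) (f : 'I_n -> R) : R := \big[Rplus/0]_(i < n) f i.

Definition inner {d} (x y : vec d) : R := rsum d (fun k => x k * y k).
Definition vnorm {d} (x : vec d) : R := sqrt (inner x x).

(* Xi = (xi_1, ..., xi_d) is an orthonormal family of d vectors of R^d
   (hence an orthonormal basis). *)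
Definition orthonormal {d} (xi : 'I_d -> vec d) : Prop :=
  forall i j : 'I_d, inner (xi i) (xi j) = if i == j then 1 else 0.

Definition is_gradient {d} (F : vec d -> R) (gF : vec d -> vec d) : Prop :=
  forall x : vec d, forall eps : R, 0 < eps -> exists delta : R, 0 < delta /\
    forall h : vec d, vnorm h < delta ->
      Rabs (F (vadd x h) - F x - inner (gF x) h) <= eps * vnorm h.

Definition grad_lipschitz {d} (gF : vec d -> vec d) (L : R) : Prop :=
  forall x h : vec d, vnorm (vsub (gF (vadd x h)) (gF x)) <= L * vnorm h.

Definition improper_int (f : R -> R) (l : R) : Prop :=
  exists pr : (forall a b : R, Riemann_integrable f a b),
    forall eps : R, 0 < eps -> exists N : R, forall a b : R,
      N <= a -> N <= b -> Rabs (RiemannInt (pr (- a) b) - l) < eps.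

Definition gauss_expect (g : R -> R) (e : R) : Prop :=
  improper_int (fun v => g v * (exp (- (v ^ 2) / 2) / sqrt (2 * PI))) e.

Definition Gdir {d} (F : vec d -> R) (x xi : vec d) (y : R) : R :=
  F (vadd x (vscale y xi)).

Definition is_smoothed_dirderiv {d} (F : vec d -> R) (x xi : vec d)
  (sigma D : R) : Prop :=
  exists e : R, gauss_expect (fun v => Gdir F x xi (sigma * v) * v) e /\
    D = / sigma * e.

(* Physicists' Hermite polynomials: H_0 = 1, H_1 = 2t,
   H_{n+1} = 2 t H_n - 2 n H_{n-1}.  hermite_pair n t = (H_n t, H_{n+1} t). *)
Fixpoint hermite_pair (n : nat) (t : R) : R * R :=
  match n with
  | O => (1, 2 * t)
  | S n' => let (a, b) := hermite_pair n' t in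
            (b, 2 * t * b - 2 * INR (S n') * a)
  end.
Definition hermite (n : nat) (t : R) : R := fst (hermite_pair n t).

(* v : 'I_M -> R enumerates the M roots of H_M (M distinct roots, hence all) *)
Definition GH_nodes (M : nat) (v : 'I_M -> R) : Prop :=
  injective v /\ forall m : 'I_M, hermite M (v m) = 0.

(* Gauss-Hermite weight (weight function e^{-t^2}) at the node t:
   w = 2^{M-1} M! sqrt(pi) / (M^2 H_{M-1}(t)^2) *)
Definition GH_weight (M : nat) (t : R) : R :=
  2 ^ (M - 1)%nat * INR (fact M) * sqrt PI / (INR M ^ 2 * (hermite (M - 1)%nat t) ^ 2).

Definition GH_est {d} (F : vec d -> R) (x xi : vec d) (sigma : R)
  (M : nat) (v : 'I_M -> R) : R :=
  / (sqrt PI * sigma) *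
  rsum M (fun m => GH_weight M (v m) * F (vadd x (vscale (sqrt 2 * sigma * v m) xi))
                    * (sqrt 2 * v m)).

Definition DGS {d} (F : vec d -> R) (x : vec d) (sigma : R) (M : nat)
  (v : 'I_M -> R) (xi : 'I_d -> vec d) : vec d :=
  fun k => rsum d (fun i => GH_est F x (xi i) sigma M v * xi i k).

(* Expanding the estimator and the gradient in the orthonormal basis, Parseval turns the
   squared error into the sum over i of (GH_i - <grad F(x), xi_i>)^2, and each term splits
   into the quadrature error, bounded by hypothesis, plus the bias D_i - <grad F(x), xi_i> of
   Gaussian smoothing; (a + b)^2 <= 2 a^2 + 2 b^2 then gives the two summands.  For the bias,
   the Lipschitz gradient and the mean value theorem give F(x + y xi) = F(x) + y s + k(y) with
   |k(y)| <= L y^2, so that, since E[v] = 0, E[v^2] = 1 and E|v|^3 <= 4 / sqrt(2 pi), the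
   smoothed derivative (1/sigma) E[F(x + sigma v xi) v] is within 4 L sigma of s.  E[v^2] = 1
   rests on the Gaussian integral, obtained by Feynman's trick; as all expectations are
   improper integrals, the moments are computed on [-N, N] with explicit O(1/N) errors. *)

From HB Require Import structures.
From mathcomp Require Import ssreflect ssrfun ssrbool eqtype ssrnat seq fintype bigop.
From Stdlib Require Import Reals Factorial Lra Lia FunctionalExtensionality.
From Coquelicot Require Import Coquelicot.
From mathcomp Require Import ssralg matrix Rstruct.
Open Scope R_scope.

(** * Finite sums and orthonormal bases *)

(* Makes the bigop theory available for [rsum], which folds [Rplus] rather than [+%R]. *)
HB.instance Definition _ := Monoid.isComLaw.Build R 0 Rplus
  (fun a b c => esym (Rplus_assoc a b c)) Rplus_comm Rplus_0_l.

Lemma eq_rsum n (f g : 'I_n -> R) : (forall i, f i = g i) -> rsum n f = rsum n g.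
Proof. by move=> fg; apply: eq_bigr => i _. Qed.

Lemma rsumD n (f g : 'I_n -> R) : rsum n (fun i => f i + g i) = rsum n f + rsum n g.
Proof. exact: big_split. Qed.

Lemma rsum_mulr n c (f : 'I_n -> R) : c * rsum n f = rsum n (fun i => c * f i).
Proof.
rewrite /rsum; elim/big_rec2: _ => [|i y1 y2 _ <-]; first exact: Rmult_0_r.
exact: Rmult_plus_distr_l.
Qed.

Lemma rsumB n (f g : 'I_n -> R) : rsum n (fun i => f i - g i) = rsum n f - rsum n g.
Proof.
rewrite /Rminus -(Rmult_1_l (rsum n g)) Ropp_mult_distr_l rsum_mulr -rsumD.
by apply: eq_rsum => i; ring.
Qed.

Lemma rsum_swap n m (f : 'I_n -> 'I_m -> R) :
  rsum n (fun i => rsum m (f i)) = rsum m (fun j => rsum n (fun i => f i j)).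
Proof. exact: exchange_big. Qed.

Lemma rsum_le n (f g : 'I_n -> R) : (forall i, f i <= g i) -> rsum n f <= rsum n g.
Proof. by move=> fg; rewrite /rsum; elim/big_ind2: _ => *; [lra | lra | apply: fg]. Qed.

Lemma rsum_const n c : rsum n (fun _ => c) = INR n * c.
Proof.
rewrite /rsum big_const card_ord; elim: n => /= [|n ->]; first lra.
by case: n => /= [|n]; lra.
Qed.

Lemma rsum_kronecker n (f : 'I_n -> R) k :
  rsum n (fun l => f l * (if k == l then 1 else 0)) = f k.
Proof.
rewrite /rsum (bigD1 k) //= eqxx big1 ?Rplus_0_r ?Rmult_1_r // => i /negbTE.
by rewrite eq_sym => ->; lra.
Qed.

Lemma inner_ge0 {d} (a : vec d) : 0 <= inner a a.
Proof. by rewrite -(Rmult_0_r (INR d)) -rsum_const; apply: rsum_le => i; nra. Qed.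

Lemma inner_scaler d (a b : vec d) t : inner a (vscale t b) = t * inner a b.
Proof. by rewrite /inner rsum_mulr; apply: eq_rsum => k; rewrite /vscale; ring. Qed.

Lemma inner_subl d (a b c : vec d) : inner (vsub a b) c = inner a c - inner b c.
Proof. by rewrite /inner -rsumB; apply: eq_rsum => k; rewrite /vsub; ring. Qed.

Lemma vnorm_scale_unit d (xi : vec d) t : inner xi xi = 1 -> vnorm (vscale t xi) = Rabs t.
Proof.
move=> unit_xi; rewrite /vnorm -sqrt_Rsqr_abs /Rsqr; f_equal.
rewrite -[t * t]Rmult_1_r -unit_xi /inner rsum_mulr.
by apply: eq_rsum => k; rewrite /vscale; ring.
Qed.

Lemma Cauchy_Schwarz_unit d (a xi : vec d) : inner xi xi = 1 -> Rabs (inner a xi) <= vnorm a.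
Proof.
move=> unit_xi.
have expand c : inner (vsub a (vscale c xi)) (vsub a (vscale c xi))
                = inner a a - 2 * c * inner a xi + c * c * inner xi xi.
  rewrite /Rminus /inner Ropp_mult_distr_l !rsum_mulr -!rsumD.
  by apply: eq_rsum => k; rewrite /vsub /vscale; ring.
have := inner_ge0 (vsub a (vscale (inner a xi) xi)); rewrite expand unit_xi => ge0.
rewrite -sqrt_Rsqr_abs /vnorm; apply: sqrt_le_1_alt; rewrite /Rsqr; lra.
Qed.

Section Orthonormal.

Variables (d : nat) (xi : 'I_d -> vec d).
Hypothesis xi_orthonormal : orthonormal xi.

(* For the square matrix X with rows xi i, X X^T = 1 forces X^T X = 1. *)
Lemma orthonormal_columns k l :
  rsum d (fun i => xi i k * xi i l) = if k == l then 1 else 0.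
Proof.
pose X : 'M[R]_d := (\matrix_(i < d, j < d) xi i j)%R.
have XXt : (X *m X^T = 1%:M)%R.
  apply/matrixP => i j; rewrite !mxE.
  transitivity (inner (xi i) (xi j)).
    by rewrite /inner /rsum; apply: eq_bigr => m _; rewrite !mxE.
  by rewrite xi_orthonormal; case: eqP.
have := congr1 (fun A : 'M[R]_d => A k l) (mulmx1C XXt).
rewrite !mxE => XtX.
transitivity (((k == l)%:R : R))%R; last by case: eqP.
by rewrite -XtX /rsum; apply: eq_bigr => m _; rewrite !mxE.
Qed.

Lemma orthonormal_expansion (g : vec d) k : g k = rsum d (fun i => inner g (xi i) * xi i k).
Proof.
transitivity (rsum d (fun l => g l * rsum d (fun i => xi i l * xi i k))).
  by rewrite -(rsum_kronecker _ g k); apply: eq_rsum => l; rewrite orthonormal_columns eq_sym.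
transitivity (rsum d (fun l => rsum d (fun i => g l * xi i l * xi i k))).
  by apply: eq_rsum => l; rewrite rsum_mulr; apply: eq_rsum => i; ring.
rewrite rsum_swap; apply: eq_rsum => i.
by rewrite Rmult_comm rsum_mulr; apply: eq_rsum => l; ring.
Qed.

Lemma orthonormal_Parseval (c : 'I_d -> R) :
  inner (fun k => rsum d (fun i => c i * xi i k)) (fun k => rsum d (fun i => c i * xi i k))
  = rsum d (fun i => c i ^ 2).
Proof.
transitivity (rsum d (fun i => rsum d (fun j => c i * c j * inner (xi i) (xi j)))).
  rewrite /inner.
  transitivity (rsum d (fun k => rsum d (fun i => rsum d (fun j =>
                  c i * c j * (xi i k * xi j k))))).
    apply: eq_rsum => k; rewrite /rsum big_distrl /=; apply: eq_bigr => i _.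
    by rewrite big_distrr /=; apply: eq_bigr => j _; ring.
  rewrite rsum_swap; apply: eq_rsum => i; rewrite rsum_swap.
  by apply: eq_rsum => j; rewrite rsum_mulr.
apply: eq_rsum => i; rewrite /= Rmult_1_r -(rsum_kronecker _ (fun j => c i * c j) i).
by apply: eq_rsum => j; rewrite xi_orthonormal.
Qed.

Lemma vnorm_sub_orthonormal_sum_sqr (c : 'I_d -> R) (g : vec d) :
  vnorm (vsub (fun k => rsum d (fun i => c i * xi i k)) g) ^ 2
  = rsum d (fun i => (c i - inner g (xi i)) ^ 2).
Proof.
have -> : vsub (fun k => rsum d (fun i => c i * xi i k)) g
          = (fun k => rsum d (fun i => (c i - inner g (xi i)) * xi i k)).
  apply: functional_extensionality => k.
  rewrite /vsub [in LHS](orthonormal_expansion g k) -rsumB.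
  by apply: eq_rsum => i; ring.
by rewrite /vnorm pow2_sqrt; [exact: orthonormal_Parseval | exact: inner_ge0].
Qed.

End Orthonormal.

(** * First-order expansion along a direction *)

Lemma vadd_scale_add d (x xi : vec d) y t :
  vadd (vadd x (vscale y xi)) (vscale t xi) = vadd x (vscale (y + t) xi).
Proof. by apply: functional_extensionality => k; rewrite /vadd /vscale; ring. Qed.

Section Directional.

Variables (d : nat) (F : vec d -> R) (gF : vec d -> vec d) (x xi : vec d).
Hypotheses (F_grad : is_gradient F gF) (unit_xi : inner xi xi = 1).

Lemma derivable_pt_lim_Gdir y : derivable_pt_lim (Gdir F x xi) y (inner (gF (vadd x (vscale y xi))) xi).
Proof.
move=> eps eps_gt0.
have [delta [delta_gt0 Hdelta]] := F_grad (vadd x (vscale y xi)) (eps / 2) ltac:(lra).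
exists (mkposreal delta delta_gt0) => t t_neq0 t_small /=.
have := Hdelta (vscale t xi); rewrite vnorm_scale_unit // => /(_ t_small).
rewrite vadd_scale_add inner_scaler -/(Gdir F x xi (y + t)) -/(Gdir F x xi y).
set l := inner _ xi => H.
have t_abs_gt0 : 0 < Rabs t by apply: Rabs_pos_lt.
have -> : (Gdir F x xi (y + t) - Gdir F x xi y) / t - l
          = (Gdir F x xi (y + t) - Gdir F x xi y - t * l) / t by field.
rewrite Rabs_div //; apply: (Rmult_lt_reg_r (Rabs t)) => //.
rewrite /Rdiv Rmult_assoc Rinv_l ?Rmult_1_r; [nra | lra].
Qed.

Lemma Gdir_first_order_error L y :
  0 <= L -> grad_lipschitz gF L ->
  Rabs (Gdir F x xi y - Gdir F x xi 0 - y * inner (gF x) xi) <= L * y ^ 2.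
Proof.
move=> L_ge0 gF_lip; set s := inner (gF x) xi.
pose k z := Gdir F x xi z - z * s.
have k' z : derivable_pt_lim k z (inner (gF (vadd x (vscale z xi))) xi - s).
  apply: derivable_pt_lim_minus; first exact: derivable_pt_lim_Gdir.
  by apply/is_derive_Reals; auto_derive => //; ring.
have k'_bound z : Rabs (inner (gF (vadd x (vscale z xi))) xi - s) <= L * Rabs z.
  rewrite /s -inner_subl -(vnorm_scale_unit _ _ z unit_xi).
  exact/(Rle_trans _ _ _ (Cauchy_Schwarz_unit _ _ _ unit_xi))/gF_lip.
have -> : Gdir F x xi y - Gdir F x xi 0 - y * s = k y - k 0 by rewrite /k; ring.
have [c [-> [c_lo c_hi]]] := MVT_abs k _ 0 y (fun c _ => k' c).
have c_abs : Rabs c <= Rabs y.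
  move: c_lo c_hi; rewrite /Rmin /Rmax; case: Rle_dec => _ c_lo c_hi;
    apply: Rabs_le; split_Rabs; lra.
rewrite -pow2_abs /= Rmult_1_r Rminus_0_r -Rmult_assoc.
apply: Rmult_le_compat_r; first exact: Rabs_pos.
apply: (Rle_trans _ _ _ (k'_bound c)); exact: Rmult_le_compat_l.
Qed.

End Directional.

(** * The Gaussian integral *)

Definition gauss (t : R) : R := exp (- (t ^ 2)).
Definition gauss_int (X : R) : R := RInt gauss 0 X.

(* Feynman's trick: [gauss_int X ^ 2 + feynman_int X] has zero derivative. *)
Definition feynman_kernel (X t : R) : R := exp (- (X ^ 2 * (1 + t ^ 2))) / (1 + t ^ 2).
Definition feynman_int (X : R) : R := RInt (feynman_kernel X) 0 1.

Lemma one_plus_sqr_gt0 t : 0 < 1 + t ^ 2.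
Proof. nra. Qed.

Lemma gauss_continuous t : continuous gauss t.
Proof. by apply: ex_derive_continuous; rewrite /gauss; auto_derive. Qed.

Lemma ex_RInt_gauss a b : ex_RInt gauss a b.
Proof. by apply: ex_RInt_continuous => z _; apply: gauss_continuous. Qed.

Lemma feynman_kernel_continuous X t : continuous (feynman_kernel X) t.
Proof.
apply: ex_derive_continuous; rewrite /feynman_kernel; auto_derive.
by have := one_plus_sqr_gt0 t; lra.
Qed.

Lemma is_derive_gauss_int X : is_derive gauss_int X (gauss X).
Proof.
apply: is_derive_RInt; last exact: gauss_continuous.
by apply: filter_forall => y; apply/RInt_correct/ex_RInt_gauss.
Qed.

Lemma is_derive_feynman_kernel X t :
  is_derive (fun Y => feynman_kernel Y t) X (- (2 * X) * exp (- (X ^ 2 * (1 + t ^ 2)))).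
Proof.
have := one_plus_sqr_gt0 t => Ht.
rewrite /feynman_kernel; auto_derive; first lra.
rewrite (_ : X * (X * 1) * (1 + t * (t * 1)) = X ^ 2 * (1 + t ^ 2)); last ring.
field; lra.
Qed.

Lemma continuity_2d_Derive_feynman_kernel X t :
  continuity_2d_pt (fun Y s => Derive (fun Z => feynman_kernel Z s) Y) X t.
Proof.
apply: (continuity_2d_pt_ext (fun Y s => - (2 * Y) * exp (- (Y * Y * (1 + s * s))))).
  move=> Y s; rewrite (is_derive_unique _ _ _ (is_derive_feynman_kernel Y s)).
  by rewrite /= !Rmult_1_r.
apply: continuity_2d_pt_mult.
  by apply/continuity_2d_pt_opp/continuity_2d_pt_mult;
    [apply: continuity_2d_pt_const | apply: continuity_2d_pt_id1].
apply: (continuity_1d_2d_pt_comp exp).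
  exact/derivable_continuous_pt/derivable_pt_exp.
apply/continuity_2d_pt_opp/continuity_2d_pt_mult.
  by apply: continuity_2d_pt_mult; apply: continuity_2d_pt_id1.
apply: continuity_2d_pt_plus; first exact: continuity_2d_pt_const.
by apply: continuity_2d_pt_mult; apply: continuity_2d_pt_id2.
Qed.

Lemma is_derive_feynman_int (X : R) :
  is_derive feynman_int X (- (2) * gauss X * gauss_int X).
Proof.
have ex_lin : ex_RInt (fun t => gauss (X * t + 0)) 0 1.
  apply: ex_RInt_continuous => z _.
  apply: (continuous_comp (fun t => X * t + 0) gauss); last exact: gauss_continuous.
  by apply: ex_derive_continuous; auto_derive.
have -> : - (2) * gauss X * gauss_int X
          = RInt (fun t => Derive (fun Y => feynman_kernel Y t) X) 0 1.
  have kernel_deriv t : Derive (fun Y => feynman_kernel Y t) X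
                         = - (2) * gauss X * (X * gauss (X * t + 0)).
    rewrite (is_derive_unique _ _ _ (is_derive_feynman_kernel X t)).
    have -> : exp (- (X ^ 2 * (1 + t ^ 2))) = gauss X * gauss (X * t + 0).
      by rewrite /gauss -exp_plus; f_equal; ring.
    ring.
  rewrite (RInt_ext _ (fun t => scal (- (2) * gauss X) (scal X (gauss (X * t + 0)))));
    last by move=> t _; rewrite kernel_deriv.
  rewrite RInt_scal; last exact: ex_RInt_scal.
  rewrite RInt_comp_lin; last exact: ex_RInt_gauss.
  by rewrite /gauss_int Rmult_0_r Rmult_1_r !Rplus_0_r.
apply: is_derive_RInt_param.
- by apply: filter_forall => Y t _; eexists; apply: is_derive_feynman_kernel.
- by move=> t _; apply: continuity_2d_Derive_feynman_kernel.
- by apply: filter_forall => Y; apply: ex_RInt_continuous => z _;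
    apply: feynman_kernel_continuous.
Qed.

Lemma feynman_int0 : feynman_int 0 = PI / 4.
Proof.
rewrite /feynman_int (RInt_ext _ (fun t => / (1 + t ^ 2))); last first.
  move=> t _; rewrite /feynman_kernel (_ : - (0 ^ 2 * (1 + t ^ 2)) = 0); last ring.
  by rewrite exp_0 /Rdiv Rmult_1_l.
rewrite (is_RInt_unique _ _ _ (minus (atan 1) (atan 0))).
  by rewrite atan_1 atan_0 /minus /plus /opp /=; ring.
apply: is_RInt_derive => t _; first exact/is_derive_Reals/derivable_pt_lim_atan.
by apply: ex_derive_continuous; auto_derive; have := one_plus_sqr_gt0 t; lra.
Qed.

Lemma feynman_identity (X : R) : feynman_int X + gauss_int X ^ 2 = PI / 4.
Proof.
pose Phi Y := feynman_int Y + gauss_int Y ^ 2.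
have Phi' Y : derivable_pt_lim Phi Y 0.
  apply/is_derive_Reals.
  have := is_derive_plus _ _ _ _ _ (is_derive_feynman_int Y)
            (is_derive_pow _ 2 _ _ (is_derive_gauss_int Y)).
  congr is_derive; rewrite /plus /=; ring.
have Phi0 : Phi 0 = PI / 4 by rewrite /Phi feynman_int0 /gauss_int RInt_point /zero /=; ring.
rewrite -/(Phi X) -Phi0; case: (Rtotal_order 0 X) => [X_gt0|[<- //|X_lt0]].
- by have [c [+ _]] := MVT_cor2 Phi (fun _ => 0) 0 X X_gt0 (fun c _ => Phi' c); lra.
- by have [c [+ _]] := MVT_cor2 Phi (fun _ => 0) X 0 X_lt0 (fun c _ => Phi' c); lra.
Qed.

Lemma exp_le_exp a b : a <= b -> exp a <= exp b.
Proof. by case/Rle_lt_or_eq_dec => [/exp_increasing|->]; lra. Qed.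

Lemma feynman_int_bounds X : 0 <= feynman_int X <= gauss X.
Proof.
have ex_kernel : ex_RInt (feynman_kernel X) 0 1.
  by apply: ex_RInt_continuous => z _; apply: feynman_kernel_continuous.
split.
  apply: RInt_ge_0 => // [|t _]; first lra.
  by apply/Rlt_le/Rdiv_lt_0_compat; [apply: exp_pos | apply: one_plus_sqr_gt0].
apply: (Rle_trans _ (RInt (fun _ => gauss X) 0 1)); last first.
  by rewrite RInt_const /scal /= /mult /=; lra.
apply: RInt_le => //; [lra | exact: ex_RInt_const | move=> t _].
have t_sqr := one_plus_sqr_gt0 t.
apply: (Rle_trans _ (exp (- (X ^ 2 * (1 + t ^ 2))))).
  rewrite /feynman_kernel /Rdiv -[X in _ <= X]Rmult_1_r.
  apply: Rmult_le_compat_l; first exact/Rlt_le/exp_pos.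
  by rewrite -Rinv_1; apply: Rinv_le_contravar; nra.
rewrite /gauss; apply: exp_le_exp; nra.
Qed.

Lemma sqrt_PI_gt0 : 0 < sqrt PI.
Proof. exact/sqrt_lt_R0/PI_RGT_0. Qed.

Lemma gauss_int_ge0 X : 0 <= X -> 0 <= gauss_int X.
Proof.
move=> X_ge0; apply: RInt_ge_0 => // [|t _]; first exact: ex_RInt_gauss.
exact/Rlt_le/exp_pos.
Qed.

(* [gauss_int X - sqrt PI / 2] is [- feynman_int X / (gauss_int X + sqrt PI / 2)]. *)
Lemma gauss_int_error X : 0 < X -> Rabs (gauss_int X - sqrt PI / 2) <= 2 / (sqrt PI * X).
Proof.
move=> X_gt0.
have sqrtPI_gt0 := sqrt_PI_gt0.
have sqrtPI_sqr : sqrt PI * sqrt PI = PI by apply/sqrt_sqrt/Rlt_le/PI_RGT_0.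
have I_ge0 := gauss_int_ge0 X (Rlt_le _ _ X_gt0).
have [J_ge0 J_le] := feynman_int_bounds X.
have gauss_le : gauss X <= / X.
  rewrite /gauss exp_Ropp; apply: Rinv_le_contravar => //.
  apply: (Rle_trans _ (1 + X ^ 2)); last exact: exp_ineq1_le.
  nra.
have prod : Rabs (gauss_int X - sqrt PI / 2) * (gauss_int X + sqrt PI / 2) = feynman_int X.
  rewrite -[X in _ * X]Rabs_pos_eq; last lra.
  rewrite -Rabs_mult (_ : _ * _ = - feynman_int X) ?Rabs_Ropp ?Rabs_pos_eq //.
  have := feynman_identity X; rewrite /= Rmult_1_r.
  move: sqrtPI_sqr; nra.
apply: (Rmult_le_reg_r (gauss_int X + sqrt PI / 2)); first lra.
rewrite prod; apply: (Rle_trans _ (2 / (sqrt PI * X) * (sqrt PI / 2))).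
  by apply: (Rle_trans _ _ _ J_le); rewrite (_ : _ * _ = / X) //; field; lra.
apply: Rmult_le_compat_l; last lra.
by apply/Rlt_le/Rdiv_lt_0_compat; [lra | apply: Rmult_lt_0_compat].
Qed.

(** * Truncated moments of the standard normal distribution *)

Definition bell (v : R) : R := exp (- (v ^ 2) / 2).

Lemma bell_gt0 v : 0 < bell v.
Proof. exact: exp_pos. Qed.

Lemma bell_opp v : bell (- v) = bell v.
Proof. by rewrite /bell (_ : (- v) ^ 2 = v ^ 2) //; ring. Qed.

Lemma bell0 : bell 0 = 1.
Proof. by rewrite /bell (_ : - (0 ^ 2) / 2 = 0) ?exp_0 //; field. Qed.

Lemma is_derive_bell (v : R) : is_derive bell v (- v * bell v).
Proof.
unfold bell at 1; auto_derive => //.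
by rewrite -[exp _]/(bell v); field.
Qed.

Lemma bell_continuous v : continuous bell v.
Proof. by apply: ex_derive_continuous; eexists; apply: is_derive_bell. Qed.

Lemma ex_RInt_bell a b : ex_RInt bell a b.
Proof. by apply: ex_RInt_continuous => z _; apply: bell_continuous. Qed.

Lemma mul_bell_le N : 0 < N -> N * bell N <= 2 / N.
Proof.
move=> N_gt0.
have bell_le : bell N <= / (1 + N ^ 2 / 2).
  rewrite /bell (_ : - (N ^ 2) / 2 = - (N ^ 2 / 2)); last field.
  by rewrite exp_Ropp; apply: Rinv_le_contravar; [nra | apply: exp_ineq1_le].
apply: (Rle_trans _ (N * / (1 + N ^ 2 / 2))); first by apply: Rmult_le_compat_l; lra.
apply: (Rmult_le_reg_r (N * (1 + N ^ 2 / 2))); first nra.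
rewrite (_ : N * / (1 + N ^ 2 / 2) * (N * (1 + N ^ 2 / 2)) = N * N); last by field; nra.
rewrite (_ : 2 / N * (N * (1 + N ^ 2 / 2)) = 2 + N ^ 2); last by field; lra.
simpl; nra.
Qed.

Lemma RInt_even (f : R -> R) N :
  (forall v, f (- v) = f v) -> (forall a b, ex_RInt f a b) ->
  RInt f (- N) N = 2 * RInt f 0 N.
Proof.
move=> f_even f_int; rewrite -(RInt_Chasles f (- N) 0 N) // /plus /=.
suff -> : RInt f (- N) 0 = RInt f 0 N by ring.
have := RInt_comp_lin f (-1) 0 N 0 (f_int _ _).
rewrite Rmult_0_r !Rplus_0_r (_ : -1 * N = - N); last ring.
move <-; rewrite (RInt_ext _ (fun y => opp (f y))); last first.
  move=> y _; rewrite /scal /= /mult /= (_ : -1 * y + 0 = - y); last ring.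
  by rewrite f_even /opp /=; ring.
by rewrite RInt_opp // opp_RInt_swap.
Qed.

Lemma RInt_mul_bell a b : RInt (fun v => v * bell v) a b = bell a - bell b.
Proof.
apply: is_RInt_unique.
rewrite (_ : bell a - bell b = minus (- bell b) (- bell a)); last by rewrite /minus /plus /opp /=; ring.
apply: (is_RInt_derive (fun v => - bell v)) => t _.
  by have := is_derive_opp _ _ _ (is_derive_bell t); rewrite /opp /= Ropp_mult_distr_l Ropp_involutive.
by apply: ex_derive_continuous; rewrite /bell; auto_derive.
Qed.

Lemma RInt_sqr_mul_bell a b :
  RInt (fun v => v ^ 2 * bell v) a b = RInt bell a b + (a * bell a - b * bell b).
Proof.
apply: is_RInt_unique.
have by_parts : is_RInt (fun v => v ^ 2 * bell v - bell v) a b (a * bell a - b * bell b).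
  rewrite (_ : a * bell a - b * bell b = minus (- (b * bell b)) (- (a * bell a))); last first.
    by rewrite /minus /plus /opp /=; ring.
  apply: (is_RInt_derive (fun v => - (v * bell v))) => t _.
    have := is_derive_opp _ _ _ (is_derive_mult _ _ _ _ _ (is_derive_id t) (is_derive_bell t) Rmult_comm).
    rewrite /opp /plus /mult /one /= => H.
    by rewrite (_ : _ - _ = - (1 * bell t + t * (- t * bell t))) //; ring.
  by apply: ex_derive_continuous; rewrite /bell; auto_derive.
apply: (is_RInt_ext (fun v => plus (bell v) (v ^ 2 * bell v - bell v))).
  by move=> v _; rewrite /plus /=; ring.
by apply: is_RInt_plus => //; apply: RInt_correct; apply: ex_RInt_bell.
Qed.

Lemma RInt_bell_sym N : RInt bell (- N) N = 2 * sqrt 2 * gauss_int (N / sqrt 2).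
Proof.
have sqrt2_gt0 : 0 < sqrt 2 by apply: sqrt_lt_R0; lra.
rewrite RInt_even //; [| exact: bell_opp | exact: ex_RInt_bell].
have := RInt_comp_lin bell (sqrt 2) 0 0 (N / sqrt 2) (ex_RInt_bell _ _).
rewrite Rmult_0_r !Rplus_0_r (_ : sqrt 2 * (N / sqrt 2) = N); last by field; lra.
move <-; rewrite (RInt_ext _ (fun y => scal (sqrt 2) (gauss y))); last first.
  move=> y _; rewrite /bell /gauss Rplus_0_r; congr (scal _ (exp _)).
  rewrite (_ : (sqrt 2 * y) ^ 2 = (sqrt 2 * sqrt 2) * y ^ 2); last ring.
  by rewrite sqrt_sqrt; [field | lra].
by rewrite RInt_scal; [rewrite /scal /= /mult /= /gauss_int; ring | exact: ex_RInt_gauss].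
Qed.

Lemma ex_RInt_abs_cube_mul_bell a b : ex_RInt (fun v => Rabs v ^ 3 * bell v) a b.
Proof.
apply: ex_RInt_continuous => z _.
apply: (continuous_mult (fun v => Rabs v ^ 3)); last exact: bell_continuous.
apply: (continuous_comp Rabs (fun y => y ^ 3)); first exact: continuous_Rabs.
by apply: ex_derive_continuous; auto_derive.
Qed.

Lemma RInt_abs_cube_mul_bell_le N : 0 <= N -> RInt (fun v => Rabs v ^ 3 * bell v) (- N) N <= 4.
Proof.
move=> N_ge0; rewrite RInt_even; first last.
- exact: ex_RInt_abs_cube_mul_bell.
- by move=> v; rewrite Rabs_Ropp bell_opp.
rewrite (RInt_ext _ (fun v => v ^ 3 * bell v)); last first.
  by move=> v; rewrite Rmin_left // Rmax_right // => v_pos; rewrite Rabs_pos_eq //; lra.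
rewrite (is_RInt_unique _ _ _ (minus (- ((N ^ 2 + 2) * bell N)) (- ((0 ^ 2 + 2) * bell 0)))).
  rewrite bell0 /minus /plus /opp /=.
  have := bell_gt0 N => bell_pos.
  have : 0 <= N * (N * 1) * bell N by apply: Rmult_le_pos; nra.
  lra.
apply: (is_RInt_derive (fun v => - ((v ^ 2 + 2) * bell v))) => t _.
  unfold bell at 1; auto_derive => //.
  by rewrite -[exp _]/(bell t); field.
by apply: ex_derive_continuous; rewrite /bell; auto_derive.
Qed.

Lemma RInt_sqr_mul_bell_error N : 0 < N ->
  Rabs (RInt (fun v => v ^ 2 * bell v) (- N) N - sqrt (2 * PI)) <= (4 + 8 / sqrt PI) / N.
Proof.
move=> N_gt0.
have sqrt2_gt0 : 0 < sqrt 2 by apply: sqrt_lt_R0; lra.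
have sqrtPI_gt0 := sqrt_PI_gt0.
have gi_err := gauss_int_error (N / sqrt 2) ltac:(exact: Rdiv_lt_0_compat).
have tail := mul_bell_le N N_gt0.
have tail_ge0 : 0 <= N * bell N by apply/Rmult_le_pos/Rlt_le/bell_gt0; lra.
rewrite RInt_sqr_mul_bell RInt_bell_sym bell_opp sqrt_mult; [| lra | exact/Rlt_le/PI_RGT_0].
rewrite (_ : 2 * sqrt 2 * gauss_int (N / sqrt 2) + (- N * bell N - N * bell N)
               - sqrt 2 * sqrt PI
             = 2 * sqrt 2 * (gauss_int (N / sqrt 2) - sqrt PI / 2) - 2 * (N * bell N));
  last by field.
apply: (Rle_trans _ _ _ (Rabs_triang _ _)).
rewrite Rabs_Ropp Rabs_mult (Rabs_pos_eq (2 * sqrt 2)) ?(Rabs_pos_eq (2 * _)); try lra.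
apply: (Rle_trans _ (2 * sqrt 2 * (2 / (sqrt PI * (N / sqrt 2))) + 2 * (2 / N))).
  by apply: Rplus_le_compat; [apply: Rmult_le_compat_l | ]; lra.
rewrite (_ : 2 * sqrt 2 * (2 / (sqrt PI * (N / sqrt 2))) = 4 * (sqrt 2 * sqrt 2) / (sqrt PI * N));
  last by field; lra.
by rewrite sqrt_sqrt; [right; field | ]; lra.
Qed.

(** * Bias of Gaussian smoothing *)

Lemma RInt_remainder_mul_bell_le (k : R -> R) L sigma N :
  0 <= N -> (forall y, Rabs (k y) <= L * y ^ 2) ->
  ex_RInt (fun v => k (sigma * v) * v * bell v) (- N) N ->
  Rabs (RInt (fun v => k (sigma * v) * v * bell v) (- N) N) <= 4 * L * sigma ^ 2.
Proof.
move=> N_ge0 k_le k_int.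
have L_ge0 : 0 <= L by have := k_le 1; have := Rabs_pos (k 1); rewrite pow1; lra.
have abs_cube_int : ex_RInt (fun v => scal (L * sigma ^ 2) (Rabs v ^ 3 * bell v)) (- N) N.
  exact/ex_RInt_scal/ex_RInt_abs_cube_mul_bell.
apply: (Rle_trans _ (RInt (fun v => scal (L * sigma ^ 2) (Rabs v ^ 3 * bell v)) (- N) N)).
  apply: (norm_RInt_le _ _ (- N) N _ _ ltac:(lra) _ (RInt_correct _ _ _ k_int)
            (RInt_correct _ _ _ abs_cube_int)) => v _.
  have bell_ge0 := Rlt_le _ _ (bell_gt0 v).
  rewrite /norm /= /abs /= /scal /= /mult /= !Rabs_mult (Rabs_pos_eq (bell v)) //.
  apply: (Rle_trans _ (L * (sigma * v) ^ 2 * Rabs v * bell v)).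
    by apply/Rmult_le_compat_r/Rmult_le_compat_r => //; apply: Rabs_pos.
  by right; rewrite Rpow_mult_distr -(pow2_abs v); ring.
rewrite RInt_scal; last exact: ex_RInt_abs_cube_mul_bell.
rewrite /scal /= /mult /=.
rewrite (_ : 4 * L * sigma ^ 2 = L * sigma ^ 2 * 4); last ring.
apply: Rmult_le_compat_l; last exact: RInt_abs_cube_mul_bell_le.
by apply: Rmult_le_pos => //; apply: pow2_ge_0.
Qed.

Lemma RInt_first_order_mul_bell_error (g : R -> R) s L sigma N :
  0 < N -> (forall y, Rabs (g y - g 0 - y * s) <= L * y ^ 2) ->
  ex_RInt (fun v => g (sigma * v) * v * bell v) (- N) N ->
  Rabs (RInt (fun v => g (sigma * v) * v * bell v) (- N) N - sigma * s * sqrt (2 * PI))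
    <= Rabs (sigma * s) * ((4 + 8 / sqrt PI) / N) + 4 * L * sigma ^ 2.
Proof.
move=> N_gt0 g_first_order g_int.
pose k y := g y - g 0 - y * s.
pose I1 := RInt (fun v => v * bell v) (- N) N.
pose I2 := RInt (fun v => v ^ 2 * bell v) (- N) N.
pose Ik := RInt (fun v => k (sigma * v) * v * bell v) (- N) N.
have ex1 : ex_RInt (fun v => v * bell v) (- N) N.
  by apply: ex_RInt_continuous => z _; apply: ex_derive_continuous; rewrite /bell; auto_derive.
have ex2 : ex_RInt (fun v => v ^ 2 * bell v) (- N) N.
  by apply: ex_RInt_continuous => z _; apply: ex_derive_continuous; rewrite /bell; auto_derive.
have main_part : is_RInt (fun v => g 0 * (v * bell v) + sigma * s * (v ^ 2 * bell v)) (- N) N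
                   (g 0 * I1 + sigma * s * I2).
  by apply: (is_RInt_plus _ _ _ _ _ _ (is_RInt_scal _ _ _ _ _ _) (is_RInt_scal _ _ _ _ _ _));
    apply: RInt_correct.
have exk : ex_RInt (fun v => k (sigma * v) * v * bell v) (- N) N.
  apply: (ex_RInt_ext (fun v => minus (g (sigma * v) * v * bell v)
                                  (g 0 * (v * bell v) + sigma * s * (v ^ 2 * bell v)))).
    by move=> v _; rewrite /minus /plus /opp /= /k; ring.
  by apply: ex_RInt_minus => //; eexists; apply: main_part.
have -> : RInt (fun v => g (sigma * v) * v * bell v) (- N) N = g 0 * I1 + sigma * s * I2 + Ik.
  apply: is_RInt_unique; apply: (is_RInt_ext (fun v => plus
            (g 0 * (v * bell v) + sigma * s * (v ^ 2 * bell v)) (k (sigma * v) * v * bell v))).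
    by move=> v _; rewrite /plus /= /k; ring.
  exact/(is_RInt_plus _ _ _ _ _ _ main_part)/RInt_correct.
have -> : I1 = 0 by rewrite /I1 RInt_mul_bell bell_opp; apply: Rminus_diag_eq.
rewrite (_ : g 0 * 0 + sigma * s * I2 + Ik - sigma * s * sqrt (2 * PI)
             = sigma * s * (I2 - sqrt (2 * PI)) + Ik); last ring.
apply: (Rle_trans _ _ _ (Rabs_triang _ _)); rewrite Rabs_mult.
apply: Rplus_le_compat.
  by apply: Rmult_le_compat_l; [apply: Rabs_pos | apply: RInt_sqr_mul_bell_error].
by apply: RInt_remainder_mul_bell_le => //; lra.
Qed.

Lemma improper_int_dist_le (f : R -> R) l m K B :
  improper_int f l -> 0 <= K ->
  (forall N, 0 < N -> Rabs (RInt f (- N) N - m) <= K / N + B) ->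
  Rabs (l - m) <= B.
Proof.
move=> [integrable lim] K_ge0 truncated.
apply: Rle_plus_epsilon => eps eps_gt0.
have [N0 N0_large] := lim (eps / 2) ltac:(lra).
pose N := Rmax N0 (2 * K / eps + 1).
have N_ge : N0 <= N by apply: Rmax_l.
have KN_le : 2 * K / eps + 1 <= N by apply: Rmax_r.
have KE_ge0 : 0 <= 2 * K / eps by apply: Rmult_le_pos; [lra | apply/Rlt_le/Rinv_0_lt_compat].
have N_gt0 : 0 < N by lra.
have K_div : K / N <= eps / 2.
  apply: (Rmult_le_reg_r N) => //; rewrite /Rdiv Rmult_assoc Rinv_l ?Rmult_1_r; last lra.
  have : 2 * K / eps * eps = 2 * K by field; lra.
  nra.
have := N0_large N N N_ge N_ge; rewrite -RInt_Reals => close.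
have := truncated N N_gt0.
have := Rabs_triang (l - RInt f (- N) N) (RInt f (- N) N - m).
rewrite (Rabs_minus_sym l) (_ : l - RInt f (- N) N + (RInt f (- N) N - m) = l - m);
  last ring.
lra.
Qed.

Lemma gauss_expect_first_order_error (g : R -> R) s L sigma e :
  (forall y, Rabs (g y - g 0 - y * s) <= L * y ^ 2) ->
  gauss_expect (fun v => g (sigma * v) * v) e -> Rabs (e - sigma * s) <= 4 * L * sigma ^ 2.
Proof.
move=> g_first_order e_expect.
pose c := sqrt (2 * PI); pose h v := g (sigma * v) * v * bell v.
have c_ge1 : 1 <= c by rewrite /c -sqrt_1; apply: sqrt_le_1_alt; have := PI2_1; lra.
have inv_c : 0 < / c <= 1.
  by split; [apply: Rinv_0_lt_compat | rewrite -Rinv_1; apply: Rinv_le_contravar]; lra.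
have L_ge0 : 0 <= L.
  by have := g_first_order 1; have := Rabs_pos (g 1 - g 0 - 1 * s); rewrite pow1; lra.
pose K := Rabs (sigma * s) * (4 + 8 / sqrt PI).
have K_ge0 : 0 <= K.
  apply: Rmult_le_pos; first exact: Rabs_pos.
  have : 0 < 8 / sqrt PI by apply: Rdiv_lt_0_compat; [lra | exact: sqrt_PI_gt0].
  lra.
have integrand v : g (sigma * v) * v * (exp (- v ^ 2 / 2) / sqrt (2 * PI)) = / c * h v.
  by rewrite /h /bell /c /Rdiv; ring.
have [integrable _] := e_expect.
apply: (improper_int_dist_le _ _ _ K) e_expect K_ge0 _ => N N_gt0.
have h_int : ex_RInt h (- N) N.
  apply: (ex_RInt_ext (fun v => scal c (g (sigma * v) * v * (exp (- v ^ 2 / 2) / sqrt (2 * PI))))).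
    by move=> v _; rewrite integrand /scal /= /mult /= -Rmult_assoc Rinv_r ?Rmult_1_l; lra.
  exact/ex_RInt_scal/ex_RInt_Reals_1/integrable.
have trunc_err := RInt_first_order_mul_bell_error g s L sigma N N_gt0 g_first_order h_int.
rewrite (RInt_ext _ (fun v => scal (/ c) (h v))); last by move=> v _; rewrite integrand.
rewrite RInt_scal // /scal /= /mult /=.
rewrite (_ : / c * RInt h (- N) N - sigma * s = / c * (RInt h (- N) N - sigma * s * c));
  last by field; lra.
rewrite Rabs_mult Rabs_pos_eq; last lra.
apply: (Rle_trans _ (1 * (K / N + 4 * L * sigma ^ 2))); last lra.
apply: Rmult_le_compat; [lra | exact: Rabs_pos | lra |].
by rewrite /K /Rdiv (Rmult_assoc (Rabs (sigma * s))); exact: trunc_err.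
Qed.

Lemma smoothed_dirderiv_error d (F : vec d -> R) gF L (x xi : vec d) sigma D :
  is_gradient F gF -> 0 <= L -> grad_lipschitz gF L -> inner xi xi = 1 -> 0 < sigma ->
  is_smoothed_dirderiv F x xi sigma D -> Rabs (D - inner (gF x) xi) <= 4 * L * sigma.
Proof.
move=> F_grad L_ge0 gF_lip unit_xi sigma_gt0 [e [e_expect ->]].
have := gauss_expect_first_order_error _ (inner (gF x) xi) L sigma e
          (fun y => Gdir_first_order_error _ _ _ _ _ F_grad unit_xi L y L_ge0 gF_lip) e_expect.
rewrite (_ : / sigma * e - inner (gF x) xi = / sigma * (e - sigma * inner (gF x) xi));
  last by field; lra.
rewrite Rabs_mult (Rabs_pos_eq (/ sigma)); last exact/Rlt_le/Rinv_0_lt_compat.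
move=> err; apply: (Rmult_le_reg_l sigma) => //.
rewrite -Rmult_assoc Rinv_r ?Rmult_1_l; last lra.
by rewrite (_ : sigma * (4 * L * sigma) = 4 * L * sigma ^ 2); last ring.
Qed.

(** * The estimator *)

Lemma sqr_add_le a b A B : Rabs a <= A -> Rabs b <= B -> (a + b) ^ 2 <= 2 * A ^ 2 + 2 * B ^ 2.
Proof.
move=> a_le b_le.
have a2 : a ^ 2 <= A ^ 2 by rewrite -pow2_abs; apply: pow_incr; split; [apply: Rabs_pos | ].
have b2 : b ^ 2 <= B ^ 2 by rewrite -pow2_abs; apply: pow_incr; split; [apply: Rabs_pos | ].
by have := pow2_ge_0 (a - b); nra.
Qed.

Lemma GH_error_bound_sqr C sigma M : (1 <= M)%nat ->
  (C * (INR (fact M) * sqrt PI / (2 ^ M * INR (fact (2 * M)))) * sigma ^ (2 * M - 1)) ^ 2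
  = C ^ 2 * PI * INR (fact M) ^ 2 / (4 ^ M * INR (fact (2 * M)) ^ 2) * sigma ^ (4 * M - 2).
Proof.
move=> /leP M_ge1.
rewrite (_ : (4 * M - 2 = (2 * M - 1) * 2)%nat); last by rewrite -!minusE -!multE; lia.
rewrite pow_mult (_ : 4 ^ M = 2 ^ M * 2 ^ M); last by rewrite -Rpow_mult_distr; f_equal; ring.
rewrite -[in RHS](pow2_sqrt PI); last exact/Rlt_le/PI_RGT_0.
have := pow_nonzero 2 M ltac:(lra); have := not_0_INR _ (fact_neq_0 (2 * M)).
by move=> *; field.
Qed.

Theorem proposition1 (d : nat) (F : vec d -> R) (gF : vec d -> vec d) (L : R)
  (xi : 'I_d -> vec d) (sigma : R) (M : nat) (C : R) (x : vec d)
  (v : 'I_M -> R) (D : 'I_d -> R) :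
  is_gradient F gF -> 0 < L -> grad_lipschitz gF L ->
  orthonormal xi -> 0 < sigma -> (1 <= M)%nat -> 0 < C ->
  GH_nodes M v ->
  (forall i : 'I_d, is_smoothed_dirderiv F x (xi i) sigma (D i)) ->
  (forall i : 'I_d,
     Rabs (GH_est F x (xi i) sigma M v - D i)
       <= C * (INR (fact M) * sqrt PI / (2 ^ M * INR (fact (2 * M)%nat)))
            * sigma ^ (2 * M - 1)%nat) ->
  (vnorm (vsub (DGS F x sigma M v xi) (gF x))) ^ 2
    <= 2 * C ^ 2 * PI * INR d * (INR (fact M)) ^ 2
         / (4 ^ M * (INR (fact (2 * M)%nat)) ^ 2) * sigma ^ (4 * M - 2)%nat
       + 32 * INR d * L ^ 2 * sigma ^ 2.
Proof.
move=> F_grad L_gt0 gF_lip xi_orthonormal sigma_gt0 M_ge1 _ _ smoothed GH_err.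
set E := C * _ * _ in GH_err.
rewrite /DGS vnorm_sub_orthonormal_sum_sqr //.
apply: (Rle_trans _ (rsum d (fun _ => 2 * E ^ 2 + 2 * (4 * L * sigma) ^ 2))).
  apply: rsum_le => i.
  have unit_xi : inner (xi i) (xi i) = 1 by rewrite xi_orthonormal eqxx.
  rewrite (_ : _ - _ = (GH_est F x (xi i) sigma M v - D i) + (D i - inner (gF x) (xi i)));
    last ring.
  apply: sqr_add_le; first exact: GH_err.
  by apply: (smoothed_dirderiv_error _ F) => //; lra.
by rewrite rsum_const /E GH_error_bound_sqr //; right; rewrite /Rdiv; ring.
Qed.
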